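(* Let $G$ be a connected graph with maximum degree $\Delta$ and minimum degree $\delta\geq 2$. If $\Delta-\delta\leq (2\delta-1)^{2}$, then $GA(G)>ABC(G)$.
   Context: All graphs are finite, simple and undirected. For a graph $G$ with vertex degrees $d_i$ (degree of vertex $v_i$), the first geometric-arithmetic index is $GA(G)=\sum_{v_iv_j\in E(G)}\frac{2\sqrt{d_id_j}}{d_i+d_j}$ and the atom-bond connectivity index is $ABC(G)=\sum_{v_iv_j\in E(G)}\sqrt{\frac{d_i+d_j-2}{d_id_j}}$. *)

From mathcomp Require Import all_boot all_order all_algebra.
Set Implicit Arguments. Unset Strict Implicit. Unset Printing Implicit Defensive.
Import Order.TTheory GRing.Theory Num.Theory.

Definition simple_graph (T : finType) (e : rel T) : Prop :=
  symmetric e /\ irreflexive e.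

Definition deg (T : finType) (e : rel T) (v : T) : nat := #|[set w | e v w]|.

Definition connected_graph (T : finType) (e : rel T) : Prop :=
  forall x y : T, connect e x y.

Definition is_min_deg (T : finType) (e : rel T) (d : nat) : Prop :=
  (exists v, deg e v = d) /\ (forall v, d <= deg e v)%N.
Definition is_max_deg (T : finType) (e : rel T) (d : nat) : Prop :=
  (exists v, deg e v = d) /\ (forall v, deg e v <= d)%N.

Local Open Scope ring_scope.

(* Sum over the edges of G of f(d_u, d_v), for symmetric f: each unordered edge
   {u,v} appears twice among ordered adjacent pairs (u,v), hence the factor 1/2. *)
Definition edge_sum (R : rcfType) (T : finType) (e : rel T)
  (f : R -> R -> R) : R :=
  2^-1 * \sum_(u : T) \sum_(v : T | e u v) f (deg e u)%:R (deg e v)%:R.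

Definition GA_term (R : rcfType) (a b : R) : R := 2 * Num.sqrt (a * b) / (a + b).
Definition ABC_term (R : rcfType) (a b : R) : R := Num.sqrt ((a + b - 2) / (a * b)).

Definition GA_index (R : rcfType) (T : finType) (e : rel T) : R :=
  edge_sum e (@GA_term R).
Definition ABC_index (R : rcfType) (T : finType) (e : rel T) : R :=
  edge_sum e (@ABC_term R).

From mathcomp Require Import all_boot all_order all_algebra ring lra.

Import Order.TTheory GRing.Theory Num.Theory.
Local Open Scope ring_scope.

(* Both indices are edge sums, so it suffices to compare the two terms on each
   edge uv.  Squaring, ABC < GA on degrees a <= b means
   (a + b - 2) (a + b)^2 < 4 (a b)^2, and when b - a <= (2a - 1)^2 this
   polynomial inequality holds because the difference of its two sides is a
   sum of manifestly nonnegative terms.  All degrees lie in [delta, Delta], so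
   the hypothesis on Delta - delta bounds every gap b - a. *)

Section EdgeTerms.
Variable R : rcfType.
Implicit Types x y : R.

Lemma GA_termC x y : GA_term x y = GA_term y x.
Proof. by rewrite /GA_term [x + y]addrC [x * y]mulrC. Qed.

Lemma ABC_termC x y : ABC_term x y = ABC_term y x.
Proof. by rewrite /ABC_term [x + y]addrC [x * y]mulrC. Qed.

Lemma GA_term_sqrt x y : 0 <= x * y -> 0 < x + y ->
  GA_term x y = Num.sqrt (4 * (x * y) / (x + y) ^+ 2).
Proof.
move=> hp hs.
have -> : 4 * (x * y) / (x + y) ^+ 2 = GA_term x y ^+ 2.
  by rewrite /GA_term expr_div_n exprMn sqr_sqrtr //; congr (_ * _ / _); ring.
by rewrite sqrtr_sqr ger0_norm // /GA_term divr_ge0 ?mulr_ge0 ?sqrtr_ge0 ?ltW.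
Qed.

Lemma ABC_term_lt_GA_term x y : 0 < x -> 0 < y ->
  (ABC_term x y < GA_term x y) = ((x + y - 2) * (x + y) ^+ 2 < 4 * (x * y) ^+ 2).
Proof.
move=> hx hy; have hp : 0 < x * y by apply: mulr_gt0.
have hs : 0 < x + y by apply: addr_gt0.
rewrite GA_term_sqrt ?ltW // /ABC_term ltr_sqrt; last first.
  by rewrite divr_gt0 ?exprn_gt0 ?mulr_gt0.
by rewrite ltr_pdivrMr // mulrAC ltr_pdivlMr ?exprn_gt0 // -mulrA -expr2.
Qed.

Lemma ABC_GA_ineq_of_gap x y : 1 <= 2 * x -> x <= y -> y - x <= (2 * x - 1) ^+ 2 ->
  (x + y - 2) * (x + y) ^+ 2 < 4 * (x * y) ^+ 2.
Proof.
move=> hx hxy hd; rewrite -subr_gt0.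
set d := y - x; set t := (2 * x - 1) ^+ 2 - d.
(* t >= 0 is the gap hypothesis; every summand below is then nonnegative. *)
have -> : 4 * (x * y) ^+ 2 - (x + y - 2) * (x + y) ^+ 2 =
    4 * x ^+ 2 * ((x - 1) ^+ 2 + 1) + d * (2 * x + 1) + d ^+ 2 * t
    + d * (2 * x - 1) * t.
  by rewrite /t /d; ring.
have d0 : 0 <= d by rewrite subr_ge0.
have t0 : 0 <= t by rewrite subr_ge0.
have x0 : 0 < x by lra.
rewrite -!addrA ltr_pwDl ?mulr_gt0 ?exprn_gt0 ?ltr_pwDr ?ltr01 ?sqr_ge0 //.
by rewrite ?addr_ge0 ?mulr_ge0 ?exprn_ge0 //; lra.
Qed.
End EdgeTerms.

Lemma ABC_term_lt_GA_term_within (R : rcfType) (m M x y : R) :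
  1 <= 2 * m -> M - m <= (2 * m - 1) ^+ 2 ->
  m <= x <= M -> m <= y <= M -> ABC_term x y < GA_term x y.
Proof.
wlog xy : x y / x <= y.
  move=> W hm hmM hx hy; have [xy|/ltW yx] := leP x y; first exact: W.
  by rewrite ABC_termC GA_termC; apply: W.
move=> hm hmM /andP[mx xM] /andP[my yM].
rewrite ABC_term_lt_GA_term ?(lt_le_trans _ mx) ?(lt_le_trans _ my) //; try lra.
apply: ABC_GA_ineq_of_gap => //; first lra.
have : (2 * m - 1) ^+ 2 <= (2 * x - 1) ^+ 2.
  by rewrite ler_sqr ?nnegrE; lra.
lra.
Qed.

Section EdgeSum.
Variables (R : rcfType) (T : finType) (e : rel T).

Lemma deg_gt0P (u : T) : reflect (exists v, e u v) (0 < deg e u)%N.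
Proof.
rewrite /deg lt0n cards_eq0.
by apply: (iffP (set0Pn _)) => -[v]; rewrite ?inE; exists v; rewrite ?inE.
Qed.

Lemma edge_sum_lt (f g : R -> R -> R) :
  (exists u v, e u v) ->
  (forall u v, e u v -> f (deg e u)%:R (deg e v)%:R < g (deg e u)%:R (deg e v)%:R) ->
  edge_sum e f < edge_sum e g.
Proof.
move=> [u0 [v0 uv0]] fg; rewrite /edge_sum ltr_pM2l ?invr_gt0 ?ltr0n //.
rewrite (bigD1 u0) // [X in _ < X](bigD1 u0) //=.
apply: ltr_leD.
  by apply: ltr_sum => [|v /fg //]; apply/hasP; exists v0; rewrite ?mem_index_enum.
by apply: ler_sum => u _; apply: ler_sum => v /fg /ltW.
Qed.

End EdgeSum.

Theorem theorem3p4 (R : rcfType) (T : finType) (e : rel T)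
  (Delta delta : nat) :
  simple_graph e -> connected_graph e ->
  is_max_deg e Delta -> is_min_deg e delta ->
  (2 <= delta)%N ->
  (Delta - delta <= (2 * delta - 1) ^ 2)%N ->
  ABC_index R e < GA_index R e.
Proof.
move=> _ _ [_ degM] [[u0 du0] degm] delta2 gap.
have delta_Delta : (delta <= Delta)%N by rewrite -du0.
apply: edge_sum_lt => [|u v _].
  by exists u0; apply/deg_gt0P; rewrite du0 (leq_trans _ delta2).
apply: (@ABC_term_lt_GA_term_within _ delta%:R Delta%:R).
- by rewrite (_ : 1 = 1%:R) // -natrM ler_nat muln_gt0 (leq_trans _ delta2).
- move: gap; rewrite -(ler_nat R) natrB // natrX natrB ?muln_gt0 ?(leq_trans _ delta2) //.
  by rewrite natrM.
- by rewrite !ler_nat degm degM.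
- by rewrite !ler_nat degm degM.
Qed.
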